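(* In any medium with $n$ states, the number $m$ of effective transitions, i.e. the number of pairs $(S,t)$ with $S$ a state, $t$ a token and $St\neq S$, satisfies $m\le n\log_2 n$.
   Context: A medium consists of a finite set of states and a set of tokens, each token $t$ acting as a function on states, written $S\mapsto St$. Tokens concatenate into messages (words); $Sw$ denotes the state obtained by applying the tokens of $w$ successively to $S$. A token $t$ has a reverse $\tilde t$ if for any two distinct states $S\neq Q$, $St=Q$ iff $Q\tilde t=S$. A message is inconsistent if it contains some token together with its reverse, and consistent otherwise. A message $w$ is vacuous if for each token $t$ it contains equally many copies of $t$ and $\tilde t$. A token $t$ is effective for $S$ if $St\neq S$; a message is stepwise effective for $S$ if each successive token is effective for the state it is applied to. The axioms of a medium are: (1) each token has a unique reverse; (2) for any two distinct states $S,Q$ there is a consistent message $w$ with $Sw=Q$; (3) if $w$ is stepwise effective for $S$, then $Sw=S$ iff $w$ is vacuous; (4) if $Sw=Qz$, $w$ is stepwise effective for $S$, $z$ is stepwise effective for $Q$, and both $w,z$ are consistent, then the concatenation $wz$ is consistent. *)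

From mathcomp Require Import all_boot.
From Stdlib Require Import Reals.
Set Implicit Arguments. Unset Strict Implicit. Unset Printing Implicit Defensive.

Section Medium.
Variables (S T : finType) (act : S -> T -> S).

Definition apply_msg (s : S) (w : seq T) : S := foldl act s w.

Definition is_reverse (t t' : T) : Prop :=
  forall s q : S, s <> q -> (act s t = q <-> act q t' = s).

Definition inconsistent (w : seq T) : Prop :=
  exists t t', is_reverse t t' /\ t \in w /\ t' \in w.
Definition consistent (w : seq T) : Prop := ~ inconsistent w.

Definition vacuous (w : seq T) : Prop :=
  forall t t', is_reverse t t' -> count_mem t w = count_mem t' w.

Definition effective (s : S) (t : T) : bool := act s t != s.

Fixpoint stepwise_effective (s : S) (w : seq T) : bool :=
  match w with
  | [::] => true
  | t :: w' => effective s t && stepwise_effective (act s t) w'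
  end.

Definition is_medium : Prop :=
  (forall t : T, exists! t' : T, is_reverse t t') /\
  (forall s q : S, s <> q -> exists w, consistent w /\ apply_msg s w = q) /\
  (forall (s : S) (w : seq T), stepwise_effective s w ->
     (apply_msg s w = s <-> vacuous w)) /\
  (forall (s q : S) (w z : seq T), apply_msg s w = apply_msg q z ->
     stepwise_effective s w -> stepwise_effective q z ->
     consistent w -> consistent z -> consistent (w ++ z)).

Definition num_effective : nat := #|[pred p : S * T | effective p.1 p.2]|.

End Medium.

From Pilot Require Import Defs.
From mathcomp Require Import all_boot zify.
From Stdlib Require Import Reals Lra ClassicalEpsilon.
From Coquelicot Require Import Coquelicot.
Set Implicit Arguments. Unset Strict Implicit. Unset Printing Implicit Defensive.

(* Let e(X) count the effective transitions with both ends in a set of states X,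
   and pick one of them, from s by the token t.  The states whose content
   contains t form a set P with s t in P and s not in P; every effective
   transition entering P carries t and every one leaving P carries its reverse.
   A fixed token is injective on the states where it is effective, in source and
   in target, so splitting X along P gives
     e(X) <= e(X1) + e(X2) + 2 min(|X1|, |X2|).
   The inequality a ln a + b ln b + 2 a ln 2 <= (a + b) ln (a + b) for
   0 < a <= b then yields e(X) ln 2 <= |X| ln |X| by induction on |X|. *)

Local Open Scope R_scope.

Lemma xlnx_add_ge (a b : R) : 0 < a <= b ->
  a * ln a + b * ln b + 2 * a * ln 2 <= (a + b) * ln (a + b).
Proof.
move=> [a_gt0 le_ab].
pose f x := (a + x) * ln (a + x) - x * ln x.
have f_at_a : f a = a * ln a + 2 * a * ln 2.
  by rewrite /f Rplus_diag ln_mult; lra.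
suff : f a <= f b by rewrite f_at_a /f; lra.
case: (Rle_lt_or_eq_dec _ _ le_ab) => [lt_ab|<-]; last exact: Rle_refl.
apply/Rlt_le/(incr_function f (Finite 0) p_infty (fun x => ln (a + x) - ln x)) => //= x x_gt0 _.
- rewrite /f; auto_derive; first by repeat split; lra.
  by field; lra.
- by apply/Rgt_minus/ln_increasing; lra.
Qed.

Lemma ln_2_gt0 : 0 < ln 2.
Proof. by rewrite -ln_1; apply: ln_increasing; lra. Qed.

Lemma INR_xlnx_ge0 n : 0 <= INR n * ln (INR n).
Proof.
case: n => [|n]; first by rewrite Rmult_0_l; apply: Rle_refl.
apply: Rmult_le_pos; first exact: pos_INR.
by rewrite -ln_1; apply: ln_le; rewrite ?S_INR; have := pos_INR n; lra.
Qed.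

Lemma split_recurrence_ln_bound (A : Type) (size cost : A -> nat) :
  (forall x, (0 < cost x)%nat -> exists x1 x2,
     [/\ size x1 + size x2 = size x, 0 < size x1, 0 < size x2
       & cost x <= cost x1 + cost x2 + 2 * minn (size x1) (size x2)]%nat) ->
  forall x, INR (cost x) * ln 2 <= INR (size x) * ln (INR (size x)).
Proof.
move=> split_cost x; have [n size_n] : exists n, size x = n by exists (size x).
elim/ltn_ind: n x size_n => n IH x size_n.
case: (posnP (cost x)) => [->|cost_gt0]; first by rewrite Rmult_0_l; apply: INR_xlnx_ge0.
have [x1 [x2 [size_x n1_gt0 n2_gt0 cost_x]]] := split_cost x cost_gt0.
have IH1 := IH (size x1) ltac:(lia) x1 erefl.
have IH2 := IH (size x2) ltac:(lia) x2 erefl.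
wlog le12 : x1 x2 size_x n1_gt0 n2_gt0 cost_x IH1 IH2 / (size x1 <= size x2)%nat.
  move=> wlog_le; case: (leqP (size x1) (size x2)) => [|/ltnW le21]; first exact: wlog_le.
  by apply: (wlog_le x2 x1) => //; lia.
rewrite (minn_idPl le12) in cost_x.
have {}cost_x := le_INR _ _ (ssrnat.leP cost_x).
rewrite !plus_INR -size_x plus_INR /= in cost_x *.
have ln2_gt0 := ln_2_gt0.
apply: (Rle_trans _ ((INR (cost x1) + INR (cost x2) + 2 * INR (size x1)) * ln 2)).
  by apply: Rmult_le_compat_r; lra.
have := xlnx_add_ge (conj (lt_0_INR _ (ssrnat.ltP n1_gt0)) (le_INR _ _ (ssrnat.leP le12))).
lra.
Qed.

Local Close Scope R_scope.

Section Medium.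
Variables (S T : finType) (act : S -> T -> S).

Local Notation apply_msg := (apply_msg act).
Local Notation is_reverse := (is_reverse act).
Local Notation consistent := (consistent act).
Local Notation vacuous := (vacuous act).
Local Notation effective := (effective act).
Local Notation stepwise_effective := (stepwise_effective act).

Lemma is_reverse_sym t t' : is_reverse t t' -> is_reverse t' t.
Proof. by move=> rev_t s q neq_sq; split=> reach; apply/(rev_t q s) => // eq_qs; apply: neq_sq. Qed.

Lemma apply_msg_cat s w1 w2 : apply_msg s (w1 ++ w2) = apply_msg (apply_msg s w1) w2.
Proof. exact: foldl_cat. Qed.

Lemma stepwise_effective_cat s w1 w2 :
  stepwise_effective s (w1 ++ w2) =
  stepwise_effective s w1 && stepwise_effective (apply_msg s w1) w2.
Proof. by elim: w1 s => [|t w1 IH] s //=; rewrite IH andbA. Qed.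

Lemma consistent_sub v w : consistent w -> {subset v <= w} -> consistent v.
Proof. by move=> cons_w sub_vw [a [a' [rev_a [/sub_vw a_w /sub_vw a'_w]]]]; apply: cons_w; exists a, a'. Qed.

Fixpoint drop_ineffective s w :=
  if w is t :: w' then
    if effective s t then t :: drop_ineffective (act s t) w' else drop_ineffective s w'
  else [::].

Lemma apply_drop_ineffective s w : apply_msg s (drop_ineffective s w) = apply_msg s w.
Proof.
elim: w s => [|t w IH] s //=; case: ifP => [_|/negbFE/eqP fix_st]; first exact: IH.
by rewrite IH /apply_msg /= fix_st.
Qed.

Lemma stepwise_effective_drop_ineffective s w : stepwise_effective s (drop_ineffective s w).
Proof. by elim: w s => [|t w IH] s //=; case: ifP => [eff_st|_] /=; rewrite ?eff_st ?IH. Qed.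

Lemma drop_ineffective_subseq s w : subseq (drop_ineffective s w) w.
Proof.
elim: w s => [|t w IH] s //=; case: ifP => _; first by rewrite eqxx.
exact: subseq_trans (IH s) (subseq_cons w t).
Qed.

Definition concise s w := stepwise_effective s w /\ consistent w.

Hypothesis medium : is_medium act.

Lemma exists_reverse t : exists t', is_reverse t t'.
Proof. by have [/(_ t) [t' [rev_t _]] _] := medium; exists t'. Qed.

Definition rev_tok t := proj1_sig (constructive_indefinite_description _ (exists_reverse t)).

Lemma rev_tokP t : is_reverse t (rev_tok t).
Proof. exact: proj2_sig. Qed.

Lemma reverse_rev_tok t t' : is_reverse t t' -> t' = rev_tok t.
Proof.
have [/(_ t) [t0 [_ uniq_rev]] _] := medium.
by move=> rev_t; rewrite -(uniq_rev _ rev_t) -(uniq_rev _ (rev_tokP t)).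
Qed.

Lemma rev_tokK : involutive rev_tok.
Proof. by move=> t; rewrite -(reverse_rev_tok (is_reverse_sym (rev_tokP t))). Qed.

Lemma rev_tok_inj : injective rev_tok.
Proof. exact: inv_inj rev_tokK. Qed.

Lemma act_rev_tok s t : effective s t -> act (act s t) (rev_tok t) = s.
Proof. by move=> /eqP eff_st; apply/(rev_tokP t) => // /esym. Qed.

Lemma effective_rev_tok s t : effective s t -> effective (act s t) (rev_tok t).
Proof. by move=> eff_st; rewrite /Defs.effective act_rev_tok // eq_sym. Qed.

Lemma consistentP w : consistent w <-> {in w, forall a, rev_tok a \notin w}.
Proof.
split=> [cons_w a a_w | rev_notin [a [a' [/reverse_rev_tok -> [a_w]]]]].
  by apply/negP => ra_w; apply: cons_w; exists a, (rev_tok a); split=> //; apply: rev_tokP.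
by rewrite (negbTE (rev_notin a a_w)).
Qed.

Lemma vacuous_mem_rev w a : vacuous w -> a \in w -> rev_tok a \in w.
Proof. by move=> vac_w; rewrite -!has_pred1 !has_count (vac_w _ _ (rev_tokP a)). Qed.

Lemma vacuous_loop s w : stepwise_effective s w -> apply_msg s w = s -> vacuous w.
Proof. by have [_ [_ [loop _]]] := medium; move=> eff_w; apply: (proj1 (loop s w eff_w)). Qed.

Lemma exists_concise s q : exists w, concise s w /\ apply_msg s w = q.
Proof.
have [<-|neq_sq] := eqVneq s q.
  by exists [::]; split=> //; split=> // [[a [a' [_ []]]]].
have [_ [/(_ s q (elimN eqP neq_sq)) [w [cons_w <-]] _]] := medium.
exists (drop_ineffective s w); rewrite apply_drop_ineffective; split=> //; split.
  exact: stepwise_effective_drop_ineffective.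
by apply: consistent_sub cons_w _; apply/mem_subseq/drop_ineffective_subseq.
Qed.

Definition rev_msg w := map rev_tok (rev w).

Lemma mem_rev_msg a w : (rev_tok a \in rev_msg w) = (a \in w).
Proof. by rewrite mem_map ?mem_rev //; apply: rev_tok_inj. Qed.

Lemma stepwise_effective_rev_msg s w : stepwise_effective s w ->
  stepwise_effective (apply_msg s w) (rev_msg w) /\ apply_msg (apply_msg s w) (rev_msg w) = s.
Proof.
elim: w s => [|t w IH] s //= /andP [eff_st /IH [eff_rev_w back]].
rewrite /rev_msg rev_cons map_rcons -cats1 stepwise_effective_cat apply_msg_cat.
by rewrite eff_rev_w back /= effective_rev_tok //; split; last exact: act_rev_tok.
Qed.

Lemma apply_msg_cons s t w : apply_msg s (t :: w) = apply_msg (act s t) w.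
Proof. by []. Qed.

(* Otherwise [t] undoes itself and [t :: m], for a concise [m] from [s] to [s t], is
   a vacuous loop, which forces the reverse of the head of [m] into [m]. *)
Lemma rev_tok_neq s t : effective s t -> rev_tok t != t.
Proof.
move=> eff_st; apply/eqP => rev_t.
have [[|a m] [[eff_m cons_m] reach]] := exists_concise s (act s t).
  by move: eff_st; rewrite /Defs.effective -reach eqxx.
have back : act (act s t) t = s by rewrite -{2}rev_t act_rev_tok.
have vac : vacuous (t :: a :: m).
  apply: (vacuous_loop (s := act s t)); last by rewrite apply_msg_cons back.
  by rewrite /= {1}/Defs.effective back eq_sym; apply/andP.
have ra_in : rev_tok a \in a :: m.
  have a_in : a \in t :: a :: m by rewrite inE mem_head orbT.
  have /predU1P [ra_t|//] := vacuous_mem_rev vac a_in.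
  have a_t : a = t by rewrite -[a]rev_tokK ra_t rev_t.
  by rewrite ra_t -a_t mem_head.
by move/consistentP: cons_m => /(_ a (mem_head a m)); rewrite ra_in.
Qed.

Lemma concise_single s t : effective s t -> concise s [:: t].
Proof.
move=> eff_st; split; first by rewrite /= andbT.
by apply/consistentP => a; rewrite !inE => /eqP ->; apply: rev_tok_neq eff_st.
Qed.

(* The paper's [t \in \hat x]: the token [t] occurs in a concise message producing [x]. *)
Definition in_content (t : T) (x : S) : Prop :=
  exists p w, [/\ concise p w, t \in w & apply_msg p w = x].

Lemma in_content_act s t : effective s t -> in_content t (act s t).
Proof. by move=> eff_st; exists s, [:: t]; split; [apply: concise_single | apply: mem_head |]. Qed.

Lemma not_in_content s t : effective s t -> ~ in_content t s.
Proof.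
move=> eff_st [p [w [[eff_w cons_w] t_w reach]]].
have [eff_rev cons_rev] := concise_single (effective_rev_tok eff_st).
have [_ [_ [_ /(_ p (act s t) w [:: rev_tok t]) concat]]] := medium.
have same_end : apply_msg p w = apply_msg (act s t) [:: rev_tok t].
  by rewrite reach apply_msg_cons act_rev_tok.
have /consistentP/(_ t) := concat same_end eff_w eff_rev cons_w cons_rev.
by rewrite !mem_cat t_w mem_head orbT => /(_ isT).
Qed.

(* Following [w] by [~u] and the reversal of a concise [m] from [p] to [s] closes a
   loop; it is vacuous, so it contains [~t], which can only come from [m]. *)
Lemma in_content_back s u t :
  effective s u -> u != t -> in_content t (act s u) -> in_content t s.
Proof.
move=> eff_su neq_ut [p [w [[eff_w cons_w] t_w reach]]].
have [m [[eff_m cons_m] reach_s]] := exists_concise p s.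
exists p, m; split=> //.
have [] := stepwise_effective_rev_msg eff_m; rewrite reach_s => eff_back back.
have vac : vacuous (w ++ rev_tok u :: rev_msg m).
  apply: (vacuous_loop (s := p)).
    by rewrite stepwise_effective_cat eff_w reach /= effective_rev_tok // act_rev_tok.
  by rewrite apply_msg_cat reach apply_msg_cons act_rev_tok.
have t_loop : t \in w ++ rev_tok u :: rev_msg m by rewrite mem_cat t_w.
have := vacuous_mem_rev vac t_loop.
rewrite mem_cat (negbTE ((consistentP w).1 cons_w t t_w)) inE (inj_eq rev_tok_inj).
by rewrite eq_sym (negbTE neq_ut) mem_rev_msg.
Qed.

Lemma in_content_enter x u t :
  effective x u -> ~ in_content t x -> in_content t (act x u) -> u = t.
Proof.
move=> eff_xu out_x in_y; case: (eqVneq u t) => // neq_ut.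
by case: out_x; apply: in_content_back eff_xu neq_ut in_y.
Qed.

Definition edges (X : {set S}) : {set S * T} :=
  [set e | [&& e.1 \in X, act e.1 e.2 \in X & effective e.1 e.2]].

Definition labelled_edges (A B : {set S}) (t : T) : {set S * T} :=
  [set e | [&& e.1 \in A, act e.1 e.2 \in B, effective e.1 e.2 & e.2 == t]].

Lemma card_labelled_edges A B t : #|labelled_edges A B t| <= minn #|A| #|B|.
Proof.
have inj_source : {in labelled_edges A B t &, injective fst}.
  by move=> [x u] [y v]; rewrite !inE /= => /and4P [_ _ _ /eqP ->] /and4P [_ _ _ /eqP ->] ->.
have inj_target : {in labelled_edges A B t &, injective (fun e => act e.1 e.2)}.
  move=> [x u] [y v]; rewrite !inE /= => /and4P [_ _ eff_x /eqP u_t] /and4P [_ _ eff_y /eqP v_t].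
  subst u v => /= same_target.
  by rewrite -(act_rev_tok eff_x) same_target act_rev_tok.
rewrite leq_min; apply/andP; split.
  rewrite -(card_in_imset inj_source); apply/subset_leq_card/subsetP.
  by move=> _ /imsetP [[x u] /[!inE] /and4P [? _ _ _] ->].
rewrite -(card_in_imset inj_target); apply/subset_leq_card/subsetP.
by move=> _ /imsetP [[x u] /[!inE] /and4P [_ ? _ _] ->].
Qed.

Lemma edges_split (X P : {set S}) t :
  (forall x u, x \in X -> act x u \in X -> effective x u ->
     x \notin P -> act x u \in P -> u = t) ->
  #|edges X| <= #|edges (X :&: P)| + #|edges (X :\: P)| + 2 * minn #|X :&: P| #|X :\: P|.
Proof.
move=> enter_P.
have edges_cover : edges X \subset edges (X :&: P) :|: edges (X :\: P)
    :|: labelled_edges (X :\: P) (X :&: P) t :|: labelled_edges (X :&: P) (X :\: P) (rev_tok t).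
  apply/subsetP => -[x u]; rewrite !inE /= => /and3P [x_X y_X eff_xu].
  rewrite x_X y_X eff_xu !andbT /=.
  case x_P: (x \in P); case y_P: (act x u \in P) => //=.
    have back_X : act (act x u) (rev_tok u) \in X by rewrite act_rev_tok.
    have back_P : act (act x u) (rev_tok u) \in P by rewrite act_rev_tok.
    have rev_u : rev_tok u = t.
      by apply: enter_P back_X (effective_rev_tok eff_xu) _ back_P; rewrite ?y_P.
    by rewrite -rev_u rev_tokK eqxx.
  by rewrite (enter_P x u) ?x_P ?eqxx.
have := card_labelled_edges (X :\: P) (X :&: P) t.
have := card_labelled_edges (X :&: P) (X :\: P) (rev_tok t).
have := subset_leq_card edges_cover.
set E1 := edges (X :&: P); set E2 := edges (X :\: P).
set L12 := labelled_edges (X :\: P) (X :&: P) t.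
set L21 := labelled_edges (X :&: P) (X :\: P) (rev_tok t).
have := (leq_card_setU E1 E2).1.
have := (leq_card_setU (E1 :|: E2) L12).1.
have := (leq_card_setU (E1 :|: E2 :|: L12) L21).1.
lia.
Qed.

Lemma exists_edges_split (X : {set S}) : 0 < #|edges X| ->
  exists X1 X2 : {set S}, [/\ #|X1| + #|X2| = #|X|, 0 < #|X1|, 0 < #|X2|
    & #|edges X| <= #|edges X1| + #|edges X2| + 2 * minn #|X1| #|X2|].
Proof.
move=> /card_gt0P [[s t]]; rewrite inE /= => /and3P [s_X st_X eff_st].
pose P := [set x | if excluded_middle_informative (in_content t x) then true else false].
have in_P x : x \in P <-> in_content t x.
  by rewrite inE; case: excluded_middle_informative.
exists (X :&: P), (X :\: P); split.
- exact: cardsID.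
- by apply/card_gt0P; exists (act s t); rewrite inE st_X; apply/in_P/in_content_act.
- by apply/card_gt0P; exists s; rewrite inE s_X andbT; apply/negP => /in_P/not_in_content; apply.
- apply: edges_split => x u _ _ eff_xu /negP out_x /in_P in_y.
  by apply: in_content_enter eff_xu _ in_y => /in_P.
Qed.

Lemma card_edges_ln_bound (X : {set S}) :
  (INR #|edges X| * ln 2 <= INR #|X| * ln (INR #|X|))%R.
Proof.
exact: (@split_recurrence_ln_bound _ (fun X : {set S} => #|X|) _ exists_edges_split).
Qed.

End Medium.

Theorem mainTheorem1 (S T : finType) (act : S -> T -> S) :
  is_medium act ->
  (INR (num_effective act) <= INR #|S| * (ln (INR #|S|) / ln 2))%R.
Proof.
move=> medium.
have -> : num_effective act = #|edges act [set: S]|.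
  by apply: eq_card => -[x u]; rewrite !inE.
rewrite -cardsT Rmult_div_assoc.
apply/Rle_div_r; first exact: ln_2_gt0.
exact: card_edges_ln_bound.
Qed.
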